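(* Let $G$ be a group. For every positive integer $n$, $\bar\lambda_n(G) = N_{n,1}(G)$.
   Context: $\gamma_1(G) = G$, $\gamma_{j+1}(G) = [\gamma_j(G), G]$. For a subgroup $H$ and integer $m$, $H^m$ is the subgroup generated by all $m$-th powers. The $\bar\lambda$-series is $\bar\lambda_1(G) = G$, $\bar\lambda_{n+1}(G) = \bar\lambda_n(G)^4[\bar\lambda_n(G), G]$. For $1 \le k \le n$, $N_{n,k}(G) = \gamma_k(G)^{4^{n-k}}\gamma_{k+1}(G)^{4^{n-k-1}} \cdots \gamma_n(G)$; in particular $N_{n,1}(G) = G^{4^{n-1}}\gamma_2(G)^{4^{n-2}}\cdots\gamma_n(G)$. *)

From Stdlib Require Import List.
Import ListNotations.

Record group := Group {
  carrier :> Type;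
  gmul : carrier -> carrier -> carrier;
  gone : carrier;
  ginv : carrier -> carrier;
  gmulA : forall x y z, gmul x (gmul y z) = gmul (gmul x y) z;
  gmul1 : forall x, gmul gone x = x;
  gmulV : forall x, gmul (ginv x) x = gone
}.

Arguments gmul {g}. Arguments gone {g}. Arguments ginv {g}.

Section GroupDefs.
Variable G : group.

Definition gset := G -> Prop.

Fixpoint gpow (x : G) (m : nat) : G :=
  match m with 0 => gone | S k => gmul x (gpow x k) end.

Definition gcomm (x y : G) : G := gmul (ginv x) (gmul (ginv y) (gmul x y)).

Definition is_subgroup (H : gset) : Prop :=
  H gone /\ (forall x y, H x -> H y -> H (gmul x y)) /\ (forall x, H x -> H (ginv x)).

Definition gen (S : gset) : gset :=
  fun x => forall H, is_subgroup H -> (forall y, S y -> H y) -> H x.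

Definition fullset : gset := fun _ => True.
Definition oneset : gset := fun x => x = gone.

Definition commsub (H K : gset) : gset :=
  gen (fun x => exists h k, H h /\ K k /\ x = gcomm h k).

Definition powsub (H : gset) (m : nat) : gset :=
  gen (fun x => exists h, H h /\ x = gpow h m).

Definition prodset (H K : gset) : gset :=
  fun x => exists h k, H h /\ K k /\ x = gmul h k.

(* lower central series, 1-indexed: gamma 1 = G, gamma (j+1) = [gamma j, G];
   (gamma 0 := G is an irrelevant convention) *)
Fixpoint gamma (j : nat) : gset :=
  match j with
  | 0 => fullset
  | 1 => fullset
  | S k => commsub (gamma k) fullset
  end.

Fixpoint lambda_bar (j : nat) : gset :=
  match j with
  | 0 => fullset
  | 1 => fullset
  | S k => prodset (powsub (lambda_bar k) 4) (commsub (lambda_bar k) fullset)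
  end.

(* N_{n,k} = gamma_k^{4^(n-k)} gamma_{k+1}^{4^(n-k-1)} ... gamma_n^{4^0} *)
Definition N_nk (n k : nat) : gset :=
  fold_right (fun j acc => prodset (powsub (gamma j) (Nat.pow 4 (n - j))) acc)
             oneset (seq k (S n - k)).

End GroupDefs.

Arguments gamma {G}. Arguments lambda_bar {G}. Arguments N_nk {G}.

From Stdlib Require Import List Arith Lia Setoid Morphisms.

(* Put N_{k+j,k} = gamma_k^{4^j} ... gamma_{k+j}, a product of normal subgroups.
   Two inclusions, proved together by strong induction on j, drive the proof:
     [N_{k+j,k}, G] <= N_{k+j+1,k+1}   and   N_{k+j,k}^4 <= N_{k+j+1,k}.
   Both reduce to generators, the first to the bound [y^{4^j}, g] in
   N_{k+j+1,k+1} for y in gamma_k.  For its inductive step put z = y^{4^j} and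
   c = [z,g]; then z^g = zc, so [z^4, g] = z^{-4} (zc)^4, and since [c,z] lies
   one step deeper, (zc)^4 = z^4 c^4 modulo N_{k+j+2,k+2}.  Hence [z^4, g] is
   c^4 modulo that subgroup, and the power inclusion puts c^4 in N_{k+j+2,k+1}.
   The two inclusions give N_{n,1}^4 [N_{n,1}, G] <= N_{n+1,1}; the converse
   holds factor by factor, so N_{n,1} obeys the recursion of lambda-bar. *)

Section GroupTheory.
Variable G : group.
Implicit Types x y z g h : G.
Implicit Types H K S : gset G.

Local Notation "x ⋅ y" := (@gmul G x y) (at level 40, left associativity).
Local Notation "x ^+ m" := (gpow G x m) (at level 29, left associativity).
Local Notation "[~ x , y ]" := (gcomm G x y).
Local Notation "A ⊆ B" := (forall x, A x -> B x) (at level 70, no associativity).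

Lemma mulgA x y z : x ⋅ (y ⋅ z) = x ⋅ y ⋅ z. Proof. apply gmulA. Qed.
Lemma mul1g x : gone ⋅ x = x. Proof. apply gmul1. Qed.
Lemma mulVg x : ginv x ⋅ x = gone. Proof. apply gmulV. Qed.

Lemma mulgV x : x ⋅ ginv x = gone.
Proof.
  rewrite <- (mul1g (x ⋅ ginv x)), <- (mulVg (ginv x)) at 1.
  rewrite <- mulgA, (mulgA (ginv x)), mulVg, mul1g. apply mulVg.
Qed.

Lemma mulg1 x : x ⋅ gone = x.
Proof. rewrite <- (mulVg x), mulgA, mulgV, mul1g. reflexivity. Qed.

Lemma mulKg x y : ginv x ⋅ (x ⋅ y) = y.
Proof. rewrite mulgA, mulVg, mul1g. reflexivity. Qed.

Lemma mulKVg x y : x ⋅ (ginv x ⋅ y) = y.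
Proof. rewrite mulgA, mulgV, mul1g. reflexivity. Qed.

Lemma invg_unique x y : x ⋅ y = gone -> ginv x = y.
Proof. intro Exy. rewrite <- (mulg1 (ginv x)), <- Exy, mulKg. reflexivity. Qed.

Lemma invgK x : ginv (ginv x) = x. Proof. apply invg_unique, mulVg. Qed.

Lemma invMg x y : ginv (x ⋅ y) = ginv y ⋅ ginv x.
Proof. apply invg_unique. rewrite <- mulgA, mulKVg, mulgV. reflexivity. Qed.

Lemma invg1 : ginv (@gone G) = gone. Proof. apply invg_unique, mul1g. Qed.

(* Normalises a word: right-associated, inverses pushed to the letters,
   adjacent cancellations performed. *)
Ltac gsimpl := repeat first
  [ rewrite invMg | rewrite invgK | rewrite invg1 | rewrite <- mulgA
  | rewrite mulKg | rewrite mulKVg | rewrite mul1g | rewrite mulg1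
  | rewrite mulVg | rewrite mulgV ].

Lemma expgD x a b : x ^+ (a + b) = x ^+ a ⋅ x ^+ b.
Proof. induction a as [|a IHa]; simpl; [|rewrite IHa]; gsimpl; reflexivity. Qed.

Lemma expgM x a b : x ^+ (a * b) = x ^+ a ^+ b.
Proof.
  rewrite Nat.mul_comm. induction b as [|b IHb]; simpl; [reflexivity|].
  rewrite expgD, IHb. reflexivity.
Qed.

Lemma expg1 x : x ^+ 1 = x. Proof. simpl. apply mulg1. Qed.

Lemma expg1n m : gone ^+ m = gone.
Proof. induction m as [|m IHm]; simpl; [|rewrite IHm]; gsimpl; reflexivity. Qed.

Lemma commute_expg x m : x ⋅ x ^+ m = x ^+ m ⋅ x.
Proof.
  induction m as [|m IHm]; simpl; [|rewrite IHm at 1]; gsimpl; reflexivity.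
Qed.

Lemma expgVn x m : ginv x ^+ m = ginv (x ^+ m).
Proof.
  induction m as [|m IHm]; simpl; [gsimpl; reflexivity|].
  rewrite IHm, <- invMg, commute_expg. reflexivity.
Qed.

Definition conjg x g := ginv g ⋅ (x ⋅ g).

Lemma conjMg x y g : conjg (x ⋅ y) g = conjg x g ⋅ conjg y g.
Proof. unfold conjg; gsimpl; reflexivity. Qed.

Lemma conjVg x g : conjg (ginv x) g = ginv (conjg x g).
Proof. unfold conjg; gsimpl; reflexivity. Qed.

Lemma conjRg x y g : conjg [~ x, y] g = [~ conjg x g, conjg y g].
Proof. unfold conjg, gcomm; gsimpl; reflexivity. Qed.

Lemma conjXg x g m : conjg (x ^+ m) g = conjg x g ^+ m.
Proof.
  induction m as [|m IHm]; simpl; [unfold conjg; gsimpl; reflexivity|].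
  rewrite conjMg, IHm. reflexivity.
Qed.

Lemma group1 H : is_subgroup G H -> H gone.
Proof. intros [H1 _]; exact H1. Qed.

Lemma groupM H x y : is_subgroup G H -> H x -> H y -> H (x ⋅ y).
Proof. intros [_ [HM _]]; apply HM. Qed.

Lemma groupV H x : is_subgroup G H -> H x -> H (ginv x).
Proof. intros [_ [_ HV]]; apply HV. Qed.

Lemma gen_subgroup S : is_subgroup G (gen G S).
Proof.
  split; [|split].
  - intros H sgH _; exact (group1 _ sgH).
  - intros x y Sx Sy H sgH SH; apply (groupM _ _ _ sgH); [apply Sx | apply Sy]; auto.
  - intros x Sx H sgH SH; apply (groupV _ _ sgH); apply Sx; auto.
Qed.

Lemma mem_gen S x : S x -> gen G S x.
Proof. intros Sx H _ SH; auto. Qed.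

Lemma gen_min S H : is_subgroup G H -> S ⊆ H -> gen G S ⊆ H.
Proof. intros sgH SH x Sx; apply Sx; auto. Qed.

Lemma gen_ext S S' : (forall x, S x <-> S' x) -> forall x, gen G S x <-> gen G S' x.
Proof.
  intros ES x; split; apply gen_min; try apply gen_subgroup;
    intros y Sy; apply mem_gen, ES; auto.
Qed.

Definition normal K := is_subgroup G K /\ forall x g, K x -> K (conjg x g).

Lemma gen_normal S : (forall x g, S x -> S (conjg x g)) -> normal (gen G S).
Proof.
  intro conjS; split; [apply gen_subgroup|]. intros x g Sx.
  assert (sg_conj : is_subgroup G (fun y => gen G S (conjg y g))).
  { split; [|split].
    - unfold conjg; gsimpl; apply group1, gen_subgroup.
    - intros a b Sa Sb; rewrite conjMg; apply groupM; auto; apply gen_subgroup.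
    - intros a Sa; rewrite conjVg; apply groupV; auto; apply gen_subgroup. }
  apply (gen_min S _ sg_conj); auto. intros y Sy; apply mem_gen, conjS; auto.
Qed.

Lemma fullset_normal : normal (fullset G).
Proof. unfold fullset; split; [split; [|split]|]; auto. Qed.

Lemma oneset_normal : normal (oneset G).
Proof.
  unfold oneset; split; [split; [|split]|].
  - reflexivity.
  - intros x y -> ->; apply mulg1.
  - intros x ->; apply invg1.
  - intros x g ->; unfold conjg; gsimpl; reflexivity.
Qed.

(* HK is a subgroup as soon as K is normal: (h1 k1)(h2 k2) = (h1 h2)(k1^h2 k2). *)
Lemma prodset_subgroup H K : is_subgroup G H -> normal K -> is_subgroup G (prodset G H K).
Proof.
  intros sgH [sgK nK]; split; [|split].
  - exists gone, gone; repeat split; [exact (group1 _ sgH) | exact (group1 _ sgK) |].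
    symmetry; apply mulg1.
  - intros x y [h1 [k1 [Hh1 [Kk1 ->]]]] [h2 [k2 [Hh2 [Kk2 ->]]]].
    exists (h1 ⋅ h2), (conjg k1 h2 ⋅ k2); repeat split.
    + apply (groupM _ _ _ sgH); auto.
    + apply (groupM _ _ _ sgK); auto.
    + unfold conjg; gsimpl; reflexivity.
  - intros x [h [k [Hh [Kk ->]]]].
    exists (ginv h), (conjg (ginv k) (ginv h)); repeat split.
    + apply (groupV _ _ sgH); auto.
    + apply nK, (groupV _ _ sgK); auto.
    + unfold conjg; gsimpl; reflexivity.
Qed.

Lemma prodset_normal H K : normal H -> normal K -> normal (prodset G H K).
Proof.
  intros [sgH nH] nK; split; [apply prodset_subgroup; auto|].
  intros x g [h [k [Hh [Kk ->]]]].
  exists (conjg h g), (conjg k g); repeat split; auto.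
  - apply nK; auto.
  - apply conjMg.
Qed.

Lemma powsub_normal H m : normal H -> normal (powsub G H m).
Proof.
  intros [_ nH]; apply gen_normal. intros x g [h [Hh ->]].
  exists (conjg h g); split; auto. apply conjXg.
Qed.

Lemma commsub_normal H K : normal H -> normal K -> normal (commsub G H K).
Proof.
  intros [_ nH] [_ nK]; apply gen_normal. intros x g [h [k [Hh [Kk ->]]]].
  exists (conjg h g), (conjg k g); repeat split; auto. apply conjRg.
Qed.

Lemma commsub_mono H H' K : H ⊆ H' -> commsub G H K ⊆ commsub G H' K.
Proof.
  intros sHH'; apply gen_min; [apply gen_subgroup|].
  intros x [h [k [Hh [Kk ->]]]]. apply mem_gen. exists h, k; auto.
Qed.

Lemma gamma_normal k : normal (@gamma G k).
Proof.
  induction k as [|[|k] IHk]; try apply fullset_normal.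
  apply commsub_normal; auto using fullset_normal.
Qed.

Lemma gammaS k : 1 <= k -> @gamma G (S k) = commsub G (gamma k) (fullset G).
Proof. destruct k; [lia | reflexivity]. Qed.

Lemma gcommM x y g : [~ x ⋅ y, g] = conjg [~ x, g] y ⋅ [~ y, g].
Proof. unfold conjg, gcomm; gsimpl; reflexivity. Qed.

Lemma gcommV x g : [~ ginv x, g] = conjg (ginv [~ x, g]) (ginv x).
Proof. unfold conjg, gcomm; gsimpl; reflexivity. Qed.

Definition central_mod K x := forall g, K [~ x, g].

Lemma central_mod_subgroup K : normal K -> is_subgroup G (central_mod K).
Proof.
  intros [sgK nK]; unfold central_mod; split; [|split].
  - intro g; unfold gcomm; gsimpl; apply group1; auto.
  - intros x y Kx Ky g; rewrite gcommM; apply groupM; auto.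
  - intros x Kx g; rewrite gcommV; apply nK, groupV; auto.
Qed.

Definition congr_mod K x y := K (ginv x ⋅ y).

Section CongruenceModNormal.
Variable K : gset G.
Hypothesis nK : normal K.

Local Instance congr_mod_equiv : Equivalence (congr_mod K).
Proof.
  destruct nK as [sgK _]; unfold congr_mod; split.
  - intro x; rewrite mulVg; apply group1; auto.
  - intros x y Kxy. replace (ginv y ⋅ x) with (ginv (ginv x ⋅ y)) by (gsimpl; reflexivity).
    apply groupV; auto.
  - intros x y z Kxy Kyz.
    replace (ginv x ⋅ z) with ((ginv x ⋅ y) ⋅ (ginv y ⋅ z)) by (gsimpl; reflexivity).
    apply groupM; auto.
Qed.

Local Instance gmul_congr_mod : Proper (congr_mod K ==> congr_mod K ==> congr_mod K) gmul.
Proof.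
  destruct nK as [sgK cK]; unfold congr_mod.
  intros x x' Kx y y' Ky.
  replace (ginv (x ⋅ y) ⋅ (x' ⋅ y')) with (conjg (ginv x ⋅ x') y ⋅ (ginv y ⋅ y'))
    by (unfold conjg; gsimpl; reflexivity).
  apply groupM; auto.
Qed.

Lemma expg_mulg_mod a b m : K [~ b, a] -> K (ginv (a ^+ m ⋅ b ^+ m) ⋅ (a ⋅ b) ^+ m).
Proof.
  intro Kba.
  assert (ab_ba : congr_mod K (b ⋅ a) (a ⋅ b)).
  { symmetry. unfold congr_mod. replace (ginv (a ⋅ b) ⋅ (b ⋅ a)) with [~ b, a]
      by (unfold gcomm; gsimpl; reflexivity). exact Kba. }
  assert (b_expg : forall i, congr_mod K (b ⋅ a ^+ i) (a ^+ i ⋅ b)).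
  { induction i as [|i IHi]; simpl; [rewrite mulg1, mul1g; reflexivity|].
    rewrite mulgA, ab_ba, <- !mulgA, IHi. reflexivity. }
  change (congr_mod K (a ^+ m ⋅ b ^+ m) ((a ⋅ b) ^+ m)).
  induction m as [|m IHm]; simpl; [rewrite mulg1; reflexivity|].
  rewrite <- IHm, <- (mulgA a b), (mulgA b), b_expg, <- !mulgA. reflexivity.
Qed.

End CongruenceModNormal.

Definition prod_list {A : Type} (F : A -> gset G) (l : list A) : gset G :=
  fold_right (fun a P => prodset G (F a) P) (oneset G) l.

Section ProdList.
Variables (A : Type) (F : A -> gset G).
Hypothesis nF : forall a, normal (F a).

Lemma prod_list_normal l : normal (prod_list F l).
Proof.
  induction l as [|a l IHl]; [apply oneset_normal|].
  apply prodset_normal; auto.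
Qed.

Lemma prod_list_factor l a : In a l -> F a ⊆ prod_list F l.
Proof.
  induction l as [|b l IHl]; [contradiction|]. intros [<-|inl] x Fx.
  - exists x, gone; repeat split; auto.
    + apply group1, prod_list_normal.
    + symmetry; apply mulg1.
  - exists gone, x; repeat split; auto.
    + apply group1, nF.
    + symmetry; apply mul1g.
Qed.

Lemma prod_list_min l S :
  is_subgroup G S -> (forall a, In a l -> F a ⊆ S) -> prod_list F l ⊆ S.
Proof.
  intro sgS; induction l as [|a l IHl]; intros FS x Px.
  - rewrite Px; apply group1; auto.
  - destruct Px as [y [z [Fy [Pz ->]]]]. apply groupM; auto.
    + apply (FS a); simpl; auto.
    + apply IHl; auto. intros b inl; apply FS; simpl; auto.
Qed.

End ProdList.

Lemma N_nk_prod_list n k :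
  N_nk n k = prod_list (fun t => powsub G (gamma t) (4 ^ (n - t))) (seq k (S n - k)).
Proof. reflexivity. Qed.

Lemma N_nk_normal n k : normal (N_nk n k).
Proof.
  rewrite N_nk_prod_list. apply prod_list_normal.
  intro t; apply powsub_normal, gamma_normal.
Qed.

Lemma expg_gamma_N_nk n k t h :
  k <= t <= n -> gamma t h -> N_nk n k (h ^+ (4 ^ (n - t))).
Proof.
  intros ktn gh. rewrite N_nk_prod_list.
  assert (nF : forall i, normal (powsub G (gamma i) (4 ^ (n - i))))
    by (intro i; apply powsub_normal, gamma_normal).
  apply (prod_list_factor _ _ nF _ t); [apply in_seq; lia|].
  apply mem_gen. exists h; auto.
Qed.

Lemma N_nk_min n k S :
  is_subgroup G S -> (forall t, k <= t <= n -> powsub G (gamma t) (4 ^ (n - t)) ⊆ S) ->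
  N_nk n k ⊆ S.
Proof.
  intros sgS factorS. rewrite N_nk_prod_list. apply prod_list_min; auto.
  intros t int; apply factorS. apply in_seq in int; lia.
Qed.

Lemma N_nk_gen_min n k S :
  is_subgroup G S -> (forall t h, k <= t <= n -> gamma t h -> S (h ^+ (4 ^ (n - t)))) ->
  N_nk n k ⊆ S.
Proof.
  intros sgS genS. apply N_nk_min; auto. intros t ktn.
  apply gen_min; auto. intros x [h [gh ->]]; auto.
Qed.

Lemma N_nk_antimono n k k' : k <= k' -> N_nk n k' ⊆ N_nk n k.
Proof.
  intro kk'. apply N_nk_gen_min; [apply N_nk_normal|].
  intros t h ktn gh; apply expg_gamma_N_nk; auto; lia.
Qed.

Definition comm_expg_bound (j : nat) : Prop :=
  forall k y g, 1 <= k -> gamma k y -> N_nk (S (k + j)) (S k) [~ y ^+ (4 ^ j), g].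

Lemma comm_expg_bound0 : comm_expg_bound 0.
Proof.
  intros k y g k1 gy. rewrite Nat.add_0_r, expg1.
  rewrite <- (expg1 [~ y, g]). replace 1 with (4 ^ (S k - S k)) by (rewrite Nat.sub_diag; reflexivity).
  apply expg_gamma_N_nk; [lia|].
  rewrite gammaS by lia. apply mem_gen. exists y, g; repeat split; auto.
Qed.

Section CommExpgInduction.
Variable j : nat.
Hypothesis bound : forall i, i <= j -> comm_expg_bound i.

Lemma commsub_N_nk_step k x g :
  1 <= k -> N_nk (k + j) k x -> N_nk (S (k + j)) (S k) [~ x, g].
Proof.
  intros k1 Nx. revert g. change (central_mod (N_nk (S (k + j)) (S k)) x).
  revert x Nx. apply N_nk_gen_min; [apply central_mod_subgroup, N_nk_normal|].
  intros t h ktn gh g.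
  assert (Nc := bound (k + j - t) ltac:(lia) t h g ltac:(lia) gh).
  replace (t + (k + j - t)) with (k + j) in Nc by lia.
  revert Nc; apply N_nk_antimono; lia.
Qed.

Lemma expg4_N_nk_step k x :
  1 <= k -> N_nk (k + j) k x -> N_nk (S (k + j)) k (x ^+ 4).
Proof.
  intros k1 Nx. set (T := N_nk (S (k + j)) k).
  assert (nT : normal T) by apply N_nk_normal.
  assert (sg : is_subgroup G (fun x => N_nk (k + j) k x /\ T (x ^+ 4))).
  { assert (nN := N_nk_normal (k + j) k). split; [|split].
    - split; [apply group1, nN|]. rewrite expg1n; apply group1, nT.
    - intros a b [Na Ta] [Nb Tb]. split; [apply groupM; auto; apply nN|].
      assert (Kba : T [~ b, a]).
      { apply (N_nk_antimono _ k (S k)); [lia|]. apply commsub_N_nk_step; auto. }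
      replace ((a ⋅ b) ^+ 4) with
        (a ^+ 4 ⋅ b ^+ 4 ⋅ (ginv (a ^+ 4 ⋅ b ^+ 4) ⋅ (a ⋅ b) ^+ 4)) by (gsimpl; reflexivity).
      apply groupM; [apply nT| |apply expg_mulg_mod; auto]. apply groupM; auto; apply nT.
    - intros a [Na Ta]. split; [apply groupV; auto; apply nN|].
      rewrite expgVn. apply groupV; auto; apply nT. }
  refine (proj2 (N_nk_gen_min _ _ _ sg _ x Nx)).
  intros t h ktn gh. split; [apply expg_gamma_N_nk; auto|].
  rewrite <- expgM, Nat.mul_comm.
  replace (4 * 4 ^ (k + j - t)) with (4 ^ (S (k + j) - t))
    by (replace (S (k + j) - t) with (S (k + j - t)) by lia; reflexivity).
  apply expg_gamma_N_nk; auto; lia.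
Qed.

Lemma comm_expg_bound_succ : comm_expg_bound (S j).
Proof.
  intros k y g k1 gy.
  set (z := y ^+ (4 ^ j)). set (c := [~ z, g]).
  set (K := @N_nk G (S (S k + j)) (S (S k))).
  assert (nK : normal K) by apply N_nk_normal.
  assert (Nc : N_nk (S k + j) (S k) c) by (apply bound; auto).
  assert (Kcz : K [~ c, z]) by (apply commsub_N_nk_step; auto; lia).
  assert (conj_z : conjg z g = z ⋅ c) by (unfold conjg, c, gcomm; gsimpl; reflexivity).
  assert (comm_z4 : [~ z ^+ 4, g] =
            c ^+ 4 ⋅ (ginv (z ^+ 4 ⋅ c ^+ 4) ⋅ (z ⋅ c) ^+ 4)).
  { unfold gcomm at 1. fold (conjg (z ^+ 4) g).
    rewrite conjXg, conj_z. gsimpl; reflexivity. }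
  replace (y ^+ (4 ^ S j)) with (z ^+ 4)
    by (unfold z; rewrite <- expgM, Nat.mul_comm; reflexivity).
  rewrite comm_z4. replace (S (k + S j)) with (S (S k + j)) by lia.
  apply groupM; [apply N_nk_normal| |].
  - apply expg4_N_nk_step; auto; lia.
  - apply (N_nk_antimono _ (S k) (S (S k))); [lia|]. apply expg_mulg_mod; auto.
Qed.

End CommExpgInduction.

Lemma comm_expg_bound_all j : comm_expg_bound j.
Proof.
  enough (below : forall m i, i <= m -> comm_expg_bound i) by exact (below j j (le_n j)).
  intro m; induction m as [|m IHm]; intros i im.
  - replace i with 0 by lia. apply comm_expg_bound0.
  - destruct (Nat.eq_dec i (S m)) as [->|ne]; [|apply IHm; lia].
    apply comm_expg_bound_succ; auto.
Qed.

Lemma commsub_N_nk n k x g : 1 <= k <= n -> N_nk n k x -> N_nk (S n) (S k) [~ x, g].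
Proof.
  intros kn. replace n with (k + (n - k)) by lia.
  apply commsub_N_nk_step; [intros i _; apply comm_expg_bound_all | lia].
Qed.

Lemma expg4_N_nk n k x : 1 <= k <= n -> N_nk n k x -> N_nk (S n) k (x ^+ 4).
Proof.
  intros kn. replace n with (k + (n - k)) by lia.
  apply expg4_N_nk_step; [intros i _; apply comm_expg_bound_all | lia].
Qed.

Definition lambda_step H := prodset G (powsub G H 4) (commsub G H (fullset G)).

Lemma lambda_step_ext H H' :
  (forall x, H x <-> H' x) -> forall x, lambda_step H x <-> lambda_step H' x.
Proof.
  intros EH x.
  assert (Epow : forall y, powsub G H 4 y <-> powsub G H' 4 y).
  { apply gen_ext; intro y; split; intros [h [Hh ->]]; exists h; split; auto; apply EH; auto. }
  assert (Ecomm : forall y, commsub G H (fullset G) y <-> commsub G H' (fullset G) y).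
  { apply gen_ext; intro y; split; intros [h [k [Hh [Gk ->]]]];
      exists h, k; repeat split; auto; apply EH; auto. }
  split; intros [a [b [Ha [Hb ->]]]]; exists a, b; repeat split.
  - exact (proj1 (Epow a) Ha).
  - exact (proj1 (Ecomm b) Hb).
  - exact (proj2 (Epow a) Ha).
  - exact (proj2 (Ecomm b) Hb).
Qed.

Lemma lambda_step_subgroup H : normal H -> is_subgroup G (lambda_step H).
Proof.
  intro nH. apply prodset_subgroup; [apply gen_subgroup|].
  apply commsub_normal; auto using fullset_normal.
Qed.

Lemma lambda_step_N_nk_sub n : 1 <= n -> lambda_step (N_nk n 1) ⊆ N_nk (S n) 1.
Proof.
  intros n1 x [a [b [Na [Nb ->]]]]. assert (nN := N_nk_normal (S n) 1).
  apply groupM; [apply nN| |].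
  - revert a Na. apply gen_min; [apply nN|].
    intros y [h [Nh ->]]. apply expg4_N_nk; auto.
  - revert b Nb. apply gen_min; [apply nN|].
    intros y [h [g [Nh [_ ->]]]]. apply (N_nk_antimono _ 1 2); [lia|].
    apply commsub_N_nk; auto.
Qed.

Lemma N_nk_sub_lambda_step n : 1 <= n -> N_nk (S n) 1 ⊆ lambda_step (N_nk n 1).
Proof.
  intros n1. assert (nN := N_nk_normal n 1).
  apply N_nk_gen_min; [apply lambda_step_subgroup; auto|].
  intros t h ktn gh.
  destruct (Nat.eq_dec t (S n)) as [->|ne].
  - rewrite Nat.sub_diag, expg1. exists gone, h; repeat split.
    + apply group1, gen_subgroup.
    + rewrite gammaS in gh by lia. revert h gh. apply commsub_mono.
      intros y gy. replace y with (y ^+ (4 ^ (n - n))) by (rewrite Nat.sub_diag; apply expg1).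
      apply expg_gamma_N_nk; auto; lia.
    + symmetry; apply mul1g.
  - exists (h ^+ (4 ^ (S n - t))), gone; repeat split.
    + apply mem_gen. exists (h ^+ (4 ^ (n - t))); split; [apply expg_gamma_N_nk; auto; lia|].
      rewrite <- expgM, Nat.mul_comm. replace (S n - t) with (S (n - t)) by lia. reflexivity.
    + apply group1, commsub_normal; auto using fullset_normal.
    + symmetry; apply mulg1.
Qed.

Lemma lambda_bar_1_N_nk x : lambda_bar 1 x <-> N_nk 1 1 x.
Proof.
  split; intros _; [|exact I].
  rewrite <- (expg1 x). apply (expg_gamma_N_nk 1 1 1 x); [lia | exact I].
Qed.

End GroupTheory.

Theorem mainTheorem8 (G : group) (n : nat) (hn : 1 <= n) :
  forall x : G, lambda_bar n x <-> N_nk n 1 x.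
Proof.
  induction n as [|n IHn]; [lia|].
  destruct n as [|n]; [apply lambda_bar_1_N_nk|].
  intro x. change (lambda_bar (S (S n)) x) with (lambda_step G (lambda_bar (S n)) x).
  rewrite (lambda_step_ext G _ _ (IHn ltac:(lia))).
  split; [apply lambda_step_N_nk_sub | apply N_nk_sub_lambda_step]; lia.
Qed.
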